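(* Let $I$ be a set, $\lambda\colon I\to I$ a bijection, and $E$ a directed weakly commutative generalized pseudo effect algebra satisfying RDP$_1$ in which $a+b$ is defined for all $a,b\in E$. Then there is a directed po-group $G^\lambda_I$ satisfying RDP$_1$, unique up to isomorphism, such that the kite pseudo effect algebra $K^{\lambda,\lambda}_I(E)$ is isomorphic to $\Gamma(\mathbb Z\overrightarrow{\times} G^\lambda_I,(1,0))$. In particular, $K^{\lambda,\lambda}_I(E)$ is a perfect pseudo effect algebra.
   Context: A generalized pseudo effect algebra (GPEA) is a structure $(E;+,0)$ with partial binary $+$ and constant $0$ such that for all $a,b,c$: (GP1) $a+b$ and $(a+b)+c$ exist iff $b+c$ and $a+(b+c)$ exist, and then they are equal; (GP2) if $a+b$ exists there are $d,e$ with $a+b=d+a=b+e$; (GP3) left and right cancellation; (GP4) $a+b=0$ implies $a=b=0$; (GP5) $a+0=0+a=a$. Order: $a\le b$ iff $a+c=b$ for some $c$; for $a\le b$, $b\ominus_\ell a$ is the unique $d$ with $d+a=b$, $a\ominus_r b$ the unique $e$ with $a+e=b$. $E$ is directed if any two elements have a common upper bound, and weakly commutative if $x+y$ is defined iff $y+x$ is defined. RDP$_1$: whenever $a_1+a_2=b_1+b_2$ there are $c_{11},c_{12},c_{21},c_{22}$ with $a_1=c_{11}+c_{12}$, $a_2=c_{21}+c_{22}$, $b_1=c_{11}+c_{21}$, $b_2=c_{12}+c_{22}$, and such that $0\le x\le c_{12}$, $0\le y\le c_{21}$ imply $x+y=y+x$. A po-group satisfies RDP$_1$ if its positive cone (as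 a GPEA under the group addition) does. A pseudo effect algebra (PEA) is a structure $(E;+,0,1)$ with: associativity as (GP1); for each $a$ unique $d,e$ with $a+d=e+a=1$; (GP2); $1+a$ or $a+1$ defined implies $a=0$. $a^-$, $a^\sim$ denote the unique elements with $a^-+a=1=a+a^\sim$. For a po-group $G$ and $u\in G^+$, $\Gamma(G,u)=\{g\in G\colon 0\le g\le u\}$ with $+$ the group addition restricted to pairs whose sum lies in $[0,u]$, and constants $0,u$, is a PEA. $\mathbb Z\overrightarrow{\times} G$ is the lexicographic product: the group $\mathbb Z\times G$ with coordinatewise operations and $(m,g)\le(n,h)$ iff $m<n$, or $m=n$ and $g\le h$. A PEA $E$ is perfect if there are disjoint $E_0,E_1$ with $E=E_0\cup E_1$ such that (a) $E_i^-=E_i^\sim=E_{1-i}$ for $i=0,1$; (b) if $x\in E_i$, $y\in E_j$ and $x+y$ is defined then $i+j\le1$ and $x+y\in E_{i+j}$; (c) $x+y$ is defined for all $x,y\in E_0$. Kite $K^{\lambda,\lambda}_I(E)$: universe $E^I\uplus\overline E^I$ with $\overline E=\{\bar a\colon a\in E\}$ a disjoint copy of $E$; $0=\langle 0\colon j\in I\rangle$, $1=\langle\bar 0\colon i\in I\rangle$; $\langle\bar a_i\rangle+\langle\bar b_i\rangle$ undefined; $\langle\bar a_i\colon i\in I\rangle+\langle f_j\colon j\in I\rangle=\langle\overline{f_{\lambda^{-1}(i)}\ominus_r a_i}\colon i\in I\rangle$ when $f_{\lambda^{-1}(i)}\le a_i$ for all $i$; $\langle f_j\rangle+\langle\bar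 a_i\rangle=\langle\overline{a_i\ominus_\ell f_{\lambda^{-1}(i)}}\colon i\in I\rangle$ when $f_{\lambda^{-1}(i)}\le a_i$ for all $i$; $\langle f_j\rangle+\langle g_j\rangle=\langle f_j+g_j\rangle$. *)

(* Partial binary operations are represented as ternary
   relations:  s a b c  means  "a + b is defined and equals c". *)
From Stdlib Require Import ZArith.

Set Implicit Arguments.
Unset Strict Implicit.

Section PartialAlgebra.
Variable E : Type.
Variable s : E -> E -> E -> Prop.

Definition functional_sum : Prop :=
  forall a b c c', s a b c -> s a b c' -> c = c'.

Definition gp_assoc : Prop :=
  (forall a b c,
     (exists d e, s a b d /\ s d c e) <-> (exists d e, s b c d /\ s a d e)) /\
  (forall a b c d e d' e', s a b d -> s d c e -> s b c d' -> s a d' e' -> e = e').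

Definition gp_conj : Prop :=
  forall a b c, s a b c -> exists d e, s d a c /\ s b e c.

Definition gp_cancel : Prop :=
  (forall a b b' c, s a b c -> s a b' c -> b = b') /\
  (forall a a' b c, s a b c -> s a' b c -> a = a').

Definition is_GPEA (z : E) : Prop :=
  functional_sum /\ gp_assoc /\ gp_conj /\ gp_cancel /\
  (forall a b, s a b z -> a = z /\ b = z) /\
  (forall a, s a z a /\ s z a a).

Definition is_PEA (z one : E) : Prop :=
  functional_sum /\ gp_assoc /\
  (forall a, exists d e, s a d one /\ s e a one /\
       forall d' e', s a d' one -> s e' a one -> d' = d /\ e' = e) /\
  gp_conj /\
  (forall a c, s one a c \/ s a one c -> a = z).

Definition gle (a b : E) : Prop := exists c, s a c b.

Definition directed : Prop := forall a b, exists c, gle a c /\ gle b c.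

Definition weakly_commutative : Prop :=
  forall x y, (exists c, s x y c) <-> (exists c, s y x c).

Definition commute (x y : E) : Prop := exists c, s x y c /\ s y x c.

Definition RDP1 : Prop :=
  forall a1 a2 b1 b2 t, s a1 a2 t -> s b1 b2 t ->
  exists c11 c12 c21 c22,
    s c11 c12 a1 /\ s c21 c22 a2 /\ s c11 c21 b1 /\ s c12 c22 b2 /\
    (forall x y, gle x c12 -> gle y c21 -> commute x y).

Definition total_sum : Prop := forall a b, exists c, s a b c.

Definition perfect (one : E) : Prop :=
  exists E0 E1 : E -> Prop,
    (forall x, E0 x \/ E1 x) /\ (forall x, ~ (E0 x /\ E1 x)) /\
    (forall x, E1 x <-> exists a, E0 a /\ s x a one) /\
    (forall x, E1 x <-> exists a, E0 a /\ s a x one) /\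
    (forall x, E0 x <-> exists a, E1 a /\ s x a one) /\
    (forall x, E0 x <-> exists a, E1 a /\ s a x one) /\
    (forall x y z, E0 x -> E0 y -> s x y z -> E0 z) /\
    (forall x y z, E0 x -> E1 y -> s x y z -> E1 z) /\
    (forall x y z, E1 x -> E0 y -> s x y z -> E1 z) /\
    (forall x y z, E1 x -> E1 y -> ~ s x y z) /\
    (forall x y, E0 x -> E0 y -> exists z, s x y z).

End PartialAlgebra.

Definition PEA_iso (E F : Type) (sE : E -> E -> E -> Prop) (zE oneE : E)
  (sF : F -> F -> F -> Prop) (zF oneF : F) : Prop :=
  exists f : E -> F,
    (exists g : F -> E, (forall x, g (f x) = x) /\ (forall y, f (g y) = y)) /\
    f zE = zF /\ f oneE = oneF /\
    (forall a b c, sE a b c <-> sF (f a) (f b) (f c)).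

Unset Implicit Arguments.
Record pogroup := PoGroup {
  pg_car :> Type;
  pg_add : pg_car -> pg_car -> pg_car;
  pg_opp : pg_car -> pg_car;
  pg_zero : pg_car;
  pg_le : pg_car -> pg_car -> Prop;
  pg_addA : forall x y z, pg_add x (pg_add y z) = pg_add (pg_add x y) z;
  pg_add0l : forall x, pg_add pg_zero x = x;
  pg_add0r : forall x, pg_add x pg_zero = x;
  pg_addNl : forall x, pg_add (pg_opp x) x = pg_zero;
  pg_addNr : forall x, pg_add x (pg_opp x) = pg_zero;
  pg_le_refl : forall x, pg_le x x;
  pg_le_trans : forall x y z, pg_le x y -> pg_le y z -> pg_le x z;
  pg_le_anti : forall x y, pg_le x y -> pg_le y x -> x = y;
  pg_le_add : forall a b x y, pg_le x y ->
     pg_le (pg_add a (pg_add x b)) (pg_add a (pg_add y b))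
}.

Definition pg_directed (G : pogroup) : Prop :=
  forall a b : G, exists c : G, pg_le G a c /\ pg_le G b c.

Definition poscone (G : pogroup) := { g : G | pg_le G (pg_zero G) g }.
Definition poscone_sum (G : pogroup) (x y z : poscone G) : Prop :=
  pg_add G (proj1_sig x) (proj1_sig y) = proj1_sig z.

Definition pg_RDP1 (G : pogroup) : Prop := RDP1 (@poscone_sum G).

Definition pogroup_iso (G H : pogroup) : Prop :=
  exists f : G -> H,
    (exists g : H -> G, (forall x, g (f x) = x) /\ (forall y, f (g y) = y)) /\
    (forall x y, f (pg_add G x y) = pg_add H (f x) (f y)) /\
    (forall x y, pg_le G x y <-> pg_le H (f x) (f y)).

Section Gamma.
Variables (T : Type) (add : T -> T -> T) (le : T -> T -> Prop) (z u : T).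
Definition Gamma_car := { g : T | le z g /\ le g u }.
Definition Gamma_sum (x y w : Gamma_car) : Prop :=
  add (proj1_sig x) (proj1_sig y) = proj1_sig w.
End Gamma.

Section Lex.
Variable G : pogroup.
Definition lex_add (p q : Z * G) : Z * G :=
  ((fst p + fst q)%Z, pg_add G (snd p) (snd q)).
Definition lex_le (p q : Z * G) : Prop :=
  (fst p < fst q)%Z \/ (fst p = fst q /\ pg_le G (snd p) (snd q)).

Definition lexGamma := Gamma_car (Z * G) lex_le (0%Z, pg_zero G) (1%Z, pg_zero G).
Definition lexGamma_sum : lexGamma -> lexGamma -> lexGamma -> Prop :=
  Gamma_sum (Z * G) lex_add lex_le (0%Z, pg_zero G) (1%Z, pg_zero G).

Lemma lexGamma_zero_proof :
  lex_le (0%Z, pg_zero G) (0%Z, pg_zero G) /\ lex_le (0%Z, pg_zero G) (1%Z, pg_zero G).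
Proof. split; [right; split; [reflexivity | apply pg_le_refl] | left; reflexivity]. Qed.
Lemma lexGamma_one_proof :
  lex_le (0%Z, pg_zero G) (1%Z, pg_zero G) /\ lex_le (1%Z, pg_zero G) (1%Z, pg_zero G).
Proof. split; [left; reflexivity | right; split; [reflexivity | apply pg_le_refl]]. Qed.

Definition lexGamma_zero : lexGamma := exist _ (0%Z, pg_zero G) lexGamma_zero_proof.
Definition lexGamma_one : lexGamma := exist _ (1%Z, pg_zero G) lexGamma_one_proof.
End Lex.

(* universe E^I (+) bar-E^I : inl f = <f_j>,  inr a = <bar a_i>.
   laminv, rhoinv are the inverses lam^{-1}, rho^{-1}.  Since
   f ⊖_r a is the unique e with f + e = a and a ⊖_l f the unique d with
   d + f = a, the partial sum is: *)
Section Kite.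
Variables (I E : Type) (sE : E -> E -> E -> Prop) (zE : E) (laminv rhoinv : I -> I).

Definition kite_car := ((I -> E) + (I -> E))%type.

Definition kite_sum (x y w : kite_car) : Prop :=
  match x, y, w with
  | inl f, inl g, inl h => forall j, sE (f j) (g j) (h j)
  | inr a, inl f, inr c => forall i, sE (f (laminv i)) (c i) (a i)
  | inl f, inr a, inr c => forall i, sE (c i) (f (rhoinv i)) (a i)
  | _, _, _ => False
  end.

Definition kite_zero : kite_car := inl (fun _ => zE).
Definition kite_one : kite_car := inr (fun _ => zE).
End Kite.

From Stdlib Require Import ZArith Lia ClassicalEpsilon ProofIrrelevance
  FunctionalExtensionality PropExtensionality.

(* Since [a + b] is always defined, [E] is a cancellative monoid in which
   [a + b = d + a = b + e] for suitable [d, e], and so is [E^I]; such a monoid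
   is the positive cone of its group of differences [G], which is then directed
   and inherits RDP_1.  The kite is [Γ(Z ×→ G, (1,0))]: a vector [f] goes to
   [(0, f)] and a barred vector [ā] to [(1, -(a ∘ λ))], and the kite sums are
   exactly the group sums that stay in [[0, (1,0)]].  Perfectness is read off
   the first coordinate.  For uniqueness, a PEA isomorphism between two such
   intervals preserves level 0 (where [x + x] is defined), so it restricts to an
   additive bijection of the positive cones, and that extends to the directed
   groups. *)

Lemma proj1_sig_inj {A : Type} {P : A -> Prop} (x y : {a | P a}) :
  proj1_sig x = proj1_sig y -> x = y.
Proof.
  destruct x as [x px], y as [y py]; simpl; intros ->.
  apply subset_eq_compat; reflexivity.
Qed.

Lemma bijective_inverse {A B : Type} (f : A -> B) :
  (forall x x', f x = f x' -> x = x') -> (forall y, exists x, f x = y) ->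
  exists g : B -> A, (forall x, g (f x) = x) /\ (forall y, f (g y) = y).
Proof.
  intros f_inj f_surj. destruct (choice (fun y x => f x = y) f_surj) as [g fK].
  exists g. split; [intros x; apply f_inj, fK | exact fK].
Qed.

Record is_group (T : Type) (add : T -> T -> T) (opp : T -> T) (zero : T) : Prop := {
  grp_addA : forall x y z, add x (add y z) = add (add x y) z;
  grp_add0g : forall x, add zero x = x;
  grp_addg0 : forall x, add x zero = x;
  grp_addNg : forall x, add (opp x) x = zero;
  grp_addgN : forall x, add x (opp x) = zero }.
Arguments is_group {T}.
Arguments grp_addA {T add opp zero}.
Arguments grp_add0g {T add opp zero}.
Arguments grp_addg0 {T add opp zero}.
Arguments grp_addNg {T add opp zero}.
Arguments grp_addgN {T add opp zero}.

Section GroupTheory.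
Context {T : Type} {add : T -> T -> T} {opp : T -> T} {zero : T}.
Hypothesis Hg : is_group add opp zero.
Local Infix "⊕" := add (at level 50, left associativity).
Local Notation "⊖ x" := (opp x) (at level 35, right associativity).

Lemma addKg x y : ⊖x ⊕ (x ⊕ y) = y.
Proof. rewrite (grp_addA Hg), (grp_addNg Hg), (grp_add0g Hg); auto. Qed.
Lemma addNKg x y : x ⊕ (⊖x ⊕ y) = y.
Proof. rewrite (grp_addA Hg), (grp_addgN Hg), (grp_add0g Hg); auto. Qed.
Lemma addgK x y : (y ⊕ x) ⊕ ⊖x = y.
Proof. rewrite <- (grp_addA Hg), (grp_addgN Hg), (grp_addg0 Hg); auto. Qed.
Lemma addgNK x y : (y ⊕ ⊖x) ⊕ x = y.
Proof. rewrite <- (grp_addA Hg), (grp_addNg Hg), (grp_addg0 Hg); auto. Qed.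

Lemma addgI x y y' : x ⊕ y = x ⊕ y' -> y = y'.
Proof. intros E. rewrite <- (addKg x y), E, addKg; auto. Qed.
Lemma addIg x y y' : y ⊕ x = y' ⊕ x -> y = y'.
Proof. intros E. rewrite <- (addgK x y), E, addgK; auto. Qed.

Lemma opp_unique x y : x ⊕ y = zero -> y = ⊖x.
Proof. intros E. apply (addgI x). rewrite E, (grp_addgN Hg); auto. Qed.
Lemma opp_unique_l x y : y ⊕ x = zero -> y = ⊖x.
Proof. intros E. apply (addIg x). rewrite E, (grp_addNg Hg); auto. Qed.

Lemma oppgK x : ⊖⊖x = x.
Proof. symmetry. apply opp_unique, (grp_addNg Hg). Qed.
Lemma oppgD x y : ⊖(x ⊕ y) = ⊖y ⊕ ⊖x.
Proof.
  symmetry. apply opp_unique.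
  rewrite <- (grp_addA Hg), (addNKg y), (grp_addgN Hg); auto.
Qed.
Lemma oppg0 : ⊖zero = zero.
Proof. symmetry. apply opp_unique, (grp_add0g Hg). Qed.

Lemma eq_opp_add_r x y w : x ⊕ ⊖y = ⊖w <-> w ⊕ x = y.
Proof.
  split; intros E.
  - rewrite <- (addgNK y x), E, addNKg; auto.
  - rewrite <- E, oppgD, addNKg; auto.
Qed.
Lemma eq_opp_add_l x y w : ⊖y ⊕ x = ⊖w <-> x ⊕ w = y.
Proof.
  split; intros E.
  - rewrite <- (addNKg y x), E, addgNK; auto.
  - rewrite <- E, oppgD, addgNK; auto.
Qed.

Lemma subg_subg x p : p ⊕ ⊖(⊖x ⊕ p) = x.
Proof. rewrite oppgD, oppgK, addNKg; auto. Qed.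

Lemma subg_shift x y w : x ⊕ ⊖y = (x ⊕ w) ⊕ ⊖(y ⊕ w).
Proof. rewrite oppgD, <- (grp_addA Hg), addNKg; auto. Qed.

Lemma translate_diff a b x y : ⊖(a ⊕ (x ⊕ b)) ⊕ (a ⊕ (y ⊕ b)) = ⊖b ⊕ ((⊖x ⊕ y) ⊕ b).
Proof. rewrite !oppgD, <- !(grp_addA Hg), (addKg a). auto. Qed.

Lemma conj_by_diff p q e : ⊖(p ⊕ ⊖q) ⊕ (e ⊕ (p ⊕ ⊖q)) = q ⊕ ((⊖p ⊕ (e ⊕ p)) ⊕ ⊖q).
Proof. rewrite oppgD, oppgK, <- !(grp_addA Hg). auto. Qed.
End GroupTheory.

Lemma pg_is_group (G : pogroup) : is_group (pg_add G) (pg_opp G) (pg_zero G).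
Proof.
  split; [apply pg_addA | apply pg_add0l | apply pg_add0r | apply pg_addNl | apply pg_addNr].
Qed.

Section PoGroupTheory.
Variable G : pogroup.
Local Infix "⊕" := (pg_add G) (at level 50, left associativity).
Local Notation "⊖ x" := (pg_opp G x) (at level 35, right associativity).
Local Notation "'O'" := (pg_zero G).
Local Infix "≤" := (pg_le G) (at level 70).
Let HG := pg_is_group G.

Lemma le_add2l a x y : x ≤ y -> a ⊕ x ≤ a ⊕ y.
Proof. intros H. pose proof (pg_le_add G a O x y H) as K. rewrite !pg_add0r in K; auto. Qed.
Lemma le_add2r b x y : x ≤ y -> x ⊕ b ≤ y ⊕ b.
Proof. intros H. pose proof (pg_le_add G O b x y H) as K. rewrite !pg_add0l in K; auto. Qed.

Lemma subg_ge0 x y : x ≤ y <-> O ≤ ⊖x ⊕ y.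
Proof.
  split; intros H.
  - rewrite <- (pg_addNl G x). apply le_add2l; auto.
  - pose proof (le_add2l x _ _ H) as K. rewrite pg_add0r, (addNKg HG) in K; auto.
Qed.
Lemma subg_ge0_r x y : x ≤ y <-> O ≤ y ⊕ ⊖x.
Proof.
  split; intros H.
  - rewrite <- (pg_addNr G x). apply le_add2r; auto.
  - pose proof (le_add2r x _ _ H) as K. rewrite pg_add0l, (addgNK HG) in K; auto.
Qed.

Lemma le_opp x y : x ≤ y -> ⊖y ≤ ⊖x.
Proof.
  intros H. pose proof (pg_le_add G (⊖y) (⊖x) x y H) as K.
  rewrite pg_addNr, pg_add0r, (addKg HG) in K; auto.
Qed.
Lemma oppg_le0 x : O ≤ x -> ⊖x ≤ O.
Proof. intros H. rewrite <- (oppg0 HG). apply le_opp; auto. Qed.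
Lemma oppg_ge0 x : x ≤ O -> O ≤ ⊖x.
Proof. intros H. rewrite <- (oppg0 HG). apply le_opp; auto. Qed.

Lemma le_ge0_addl x y : O ≤ y -> x ≤ y ⊕ x.
Proof. intros H. pose proof (le_add2r x _ _ H) as K. rewrite pg_add0l in K; auto. Qed.
Lemma le_ge0_addr x y : O ≤ y -> x ≤ x ⊕ y.
Proof. intros H. pose proof (le_add2l x _ _ H) as K. rewrite pg_add0r in K; auto. Qed.
Lemma addg_ge0 x y : O ≤ x -> O ≤ y -> O ≤ x ⊕ y.
Proof. intros Hx Hy. apply pg_le_trans with y; auto. apply le_ge0_addl; auto. Qed.

Lemma conjg_ge0 a x : O ≤ x -> O ≤ ⊖a ⊕ (x ⊕ a).
Proof.
  intros H. pose proof (pg_le_add G (⊖a) a _ _ H) as K.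
  rewrite pg_add0l, pg_addNl in K; auto.
Qed.
End PoGroupTheory.

Definition lex_opp (G : pogroup) (p : Z * G) : Z * G := ((- fst p)%Z, pg_opp G (snd p)).

Section LexProduct.
Variable G : pogroup.

Lemma lex_addA (x y z : Z * G) : lex_add G x (lex_add G y z) = lex_add G (lex_add G x y) z.
Proof. destruct x, y, z; unfold lex_add; simpl; f_equal; [lia | apply pg_addA]. Qed.
Lemma lex_add0l (x : Z * G) : lex_add G (0%Z, pg_zero G) x = x.
Proof. destruct x; unfold lex_add; simpl; rewrite pg_add0l; auto. Qed.
Lemma lex_add0r (x : Z * G) : lex_add G x (0%Z, pg_zero G) = x.
Proof. destruct x; unfold lex_add; simpl; rewrite pg_add0r; f_equal; lia. Qed.
Lemma lex_addNl (x : Z * G) : lex_add G (lex_opp G x) x = (0%Z, pg_zero G).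
Proof. destruct x; unfold lex_add, lex_opp; simpl; rewrite pg_addNl; f_equal; lia. Qed.
Lemma lex_addNr (x : Z * G) : lex_add G x (lex_opp G x) = (0%Z, pg_zero G).
Proof. destruct x; unfold lex_add, lex_opp; simpl; rewrite pg_addNr; f_equal; lia. Qed.

Lemma lex_le_refl (x : Z * G) : lex_le G x x.
Proof. right; split; auto; apply pg_le_refl. Qed.
Lemma lex_le_trans (x y z : Z * G) : lex_le G x y -> lex_le G y z -> lex_le G x z.
Proof.
  unfold lex_le; intros [H | [H1 H2]] [K | [K1 K2]]; try (left; lia).
  right; split; [lia | eapply pg_le_trans; eauto].
Qed.
Lemma lex_le_anti (x y : Z * G) : lex_le G x y -> lex_le G y x -> x = y.
Proof.
  destruct x, y; unfold lex_le; simpl; intros [H | [H1 H2]] [K | [K1 K2]]; try lia.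
  f_equal; auto. apply pg_le_anti; auto.
Qed.
Lemma lex_le_add (a b x y : Z * G) : lex_le G x y ->
  lex_le G (lex_add G a (lex_add G x b)) (lex_add G a (lex_add G y b)).
Proof.
  destruct a, b, x, y; unfold lex_le, lex_add; simpl; intros [H | [H1 H2]].
  - left; lia.
  - right; split; [lia | apply pg_le_add; auto].
Qed.
End LexProduct.

Definition LexG (G : pogroup) : pogroup :=
  PoGroup (Z * G) (lex_add G) (lex_opp G) (0%Z, pg_zero G) (lex_le G)
   (lex_addA G) (lex_add0l G) (lex_add0r G) (lex_addNl G) (lex_addNr G)
   (lex_le_refl G) (lex_le_trans G) (lex_le_anti G) (lex_le_add G).

Section GammaPEA.
Variables (H : pogroup) (u : H).
Local Infix "⊕" := (pg_add H) (at level 50, left associativity).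
Local Notation "⊖ x" := (pg_opp H x) (at level 35, right associativity).
Local Notation "'O'" := (pg_zero H).
Local Infix "≤" := (pg_le H) (at level 70).
Local Notation Γ := (Gamma_car H (pg_le H) O u).
Local Notation gsum := (Gamma_sum H (pg_add H) (pg_le H) O u).
Let HG := pg_is_group H.

Definition Gamma_elt (g : H) (p : O ≤ g /\ g ≤ u) : Γ :=
  exist (fun g => O ≤ g /\ g ≤ u) g p.

Lemma between_of_addl a x : O ≤ a -> O ≤ x -> a ⊕ x ≤ u -> O ≤ x /\ x ≤ u.
Proof. intros Ha Hx Hu. split; auto. eapply pg_le_trans; [apply le_ge0_addl, Ha | exact Hu]. Qed.
Lemma between_of_addr a x : O ≤ a -> O ≤ x -> x ⊕ a ≤ u -> O ≤ x /\ x ≤ u.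
Proof. intros Ha Hx Hu. split; auto. eapply pg_le_trans; [apply le_ge0_addr, Ha | exact Hu]. Qed.

Lemma Gamma_functional : functional_sum gsum.
Proof. intros a b c c' E E'. apply proj1_sig_inj. unfold Gamma_sum in *. congruence. Qed.

Lemma Gamma_assoc : gp_assoc gsum.
Proof.
  unfold Gamma_sum. split.
  - intros [a [a0 au]] [b [b0 bu]] [c [c0 cu]]; simpl. split.
    + intros [[d Hd] [[e He] [Ed Ee]]]; simpl in *. subst d e.
      assert (Hbc : O ≤ b ⊕ c /\ b ⊕ c ≤ u).
      { apply (between_of_addl a); [auto | apply addg_ge0; auto |].
        rewrite pg_addA; apply He. }
      exists (Gamma_elt _ Hbc), (Gamma_elt _ He); simpl. split; auto. apply pg_addA.
    + intros [[d Hd] [[e He] [Ed Ee]]]; simpl in *. subst d e.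
      assert (Hab : O ≤ a ⊕ b /\ a ⊕ b ≤ u).
      { apply (between_of_addr c); [auto | apply addg_ge0; auto |].
        rewrite <- pg_addA; apply He. }
      exists (Gamma_elt _ Hab), (Gamma_elt _ He); simpl. split; auto. symmetry; apply pg_addA.
  - intros a b c d e d' e' E1 E2 E3 E4. apply proj1_sig_inj.
    rewrite <- E2, <- E4, <- E1, <- E3. symmetry; apply pg_addA.
Qed.

Lemma Gamma_conj : gp_conj gsum.
Proof.
  unfold Gamma_sum. intros [a [a0 au]] [b [b0 bu]] [c [c0 cu]]; simpl. intros E. subst c.
  assert (Hd : O ≤ a ⊕ b ⊕ ⊖a /\ a ⊕ b ⊕ ⊖a ≤ u).
  { assert (d0 : O ≤ a ⊕ b ⊕ ⊖a).
    { rewrite <- pg_addA. rewrite <- (oppgK HG a) at 1. apply conjg_ge0; auto. }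
    apply (between_of_addr a); auto. rewrite (addgNK HG); auto. }
  assert (He : O ≤ ⊖b ⊕ (a ⊕ b) /\ ⊖b ⊕ (a ⊕ b) ≤ u).
  { apply (between_of_addl b); [auto | apply conjg_ge0; auto |].
    rewrite (addNKg HG); auto. }
  exists (Gamma_elt _ Hd), (Gamma_elt _ He); simpl.
  split; [apply (addgNK HG) | apply (addNKg HG)].
Qed.

Variables (z0 u0 : Γ) (Hz0 : proj1_sig z0 = O) (Hu0 : proj1_sig u0 = u).

Lemma Gamma_complement a : exists d e, gsum a d u0 /\ gsum e a u0 /\
  forall d' e', gsum a d' u0 -> gsum e' a u0 -> d' = d /\ e' = e.
Proof.
  unfold Gamma_sum. rewrite Hu0. destruct a as [a [a0 au]]; simpl.
  assert (Hd : O ≤ ⊖a ⊕ u /\ ⊖a ⊕ u ≤ u).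
  { split; [apply -> subg_ge0; auto |].
    apply (between_of_addl a); [auto | apply -> subg_ge0; auto | rewrite (addNKg HG); apply pg_le_refl]. }
  assert (He : O ≤ u ⊕ ⊖a /\ u ⊕ ⊖a ≤ u).
  { split; [apply -> subg_ge0_r; auto |].
    apply (between_of_addr a); [auto | apply -> subg_ge0_r; auto | rewrite (addgNK HG); apply pg_le_refl]. }
  exists (Gamma_elt _ Hd), (Gamma_elt _ He); simpl.
  split; [apply (addNKg HG) | split; [apply (addgNK HG) |]].
  intros d' e' Ed Ee. split; apply proj1_sig_inj; simpl.
  - apply (addgI HG a). rewrite Ed, (addNKg HG); auto.
  - apply (addIg HG a). rewrite Ee, (addgNK HG); auto.
Qed.

Lemma Gamma_top_absorbing a c : gsum u0 a c \/ gsum a u0 c -> a = z0.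
Proof.
  unfold Gamma_sum. rewrite Hu0. destruct a as [a [a0 au]], c as [c [c0 cu]]; simpl.
  intros Hs. apply proj1_sig_inj. rewrite Hz0. simpl. apply pg_le_anti; auto.
  destruct Hs as [E | E]; subst c.
  - pose proof (le_add2l H (⊖u) _ _ cu) as K. rewrite (addKg HG), pg_addNl in K; auto.
  - pose proof (le_add2r H (⊖u) _ _ cu) as K. rewrite (addgK HG), pg_addNr in K; auto.
Qed.

Lemma Gamma_is_PEA : is_PEA gsum z0 u0.
Proof.
  split; [exact Gamma_functional |]. split; [exact Gamma_assoc |].
  split; [exact Gamma_complement |]. split; [exact Gamma_conj | exact Gamma_top_absorbing].
Qed.
End GammaPEA.

Section LexGamma.
Variable G : pogroup.
Local Notation "'O'" := (pg_zero G).
Local Infix "≤" := (pg_le G) (at level 70).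
Local Notation one := (lexGamma_one G).

Lemma lexGamma_is_PEA : is_PEA (lexGamma_sum G) (lexGamma_zero G) one.
Proof. apply (Gamma_is_PEA (LexG G) (1%Z, O)); reflexivity. Qed.

Lemma lex_between0 g : O ≤ g -> lex_le G (0%Z, O) (0%Z, g) /\ lex_le G (0%Z, g) (1%Z, O).
Proof. intros H; split; [right; auto | left; simpl; lia]. Qed.
Lemma lex_between1 g : g ≤ O -> lex_le G (0%Z, O) (1%Z, g) /\ lex_le G (1%Z, g) (1%Z, O).
Proof. intros H; split; [left; simpl; lia | right; auto]. Qed.

Definition lexGamma0 g (H : O ≤ g) : lexGamma G := exist _ (0%Z, g) (lex_between0 g H).
Definition lexGamma1 g (H : g ≤ O) : lexGamma G := exist _ (1%Z, g) (lex_between1 g H).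

Definition level (x : lexGamma G) : Z := fst (proj1_sig x).

Lemma lex_between_cases n g :
  lex_le G (0%Z, O) (n, g) /\ lex_le G (n, g) (1%Z, O) ->
  (n = 0%Z /\ O ≤ g) \/ (n = 1%Z /\ g ≤ O).
Proof.
  unfold lex_le; simpl. intros [[H | [H1 H2]] [K | [K1 K2]]]; try lia.
  - right; auto.
  - left; auto.
Qed.

Lemma level_cases x : level x = 0%Z \/ level x = 1%Z.
Proof. destruct x as [[n g] Hx]. unfold level; simpl. destruct (lex_between_cases n g Hx); tauto. Qed.

Lemma level_add x y w : lexGamma_sum G x y w -> level w = (level x + level y)%Z.
Proof. unfold lexGamma_sum, Gamma_sum, level. intros <-. reflexivity. Qed.

Lemma complement_level_r x k : (level x = 1 - k)%Z <-> exists a, level a = k /\ lexGamma_sum G x a one.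
Proof.
  split.
  - intros Hx. destruct lexGamma_is_PEA as [_ [_ [Hc _]]].
    destruct (Hc x) as [d [_ [Hd _]]]. exists d. split; auto.
    apply level_add in Hd. change (level one) with 1%Z in Hd. lia.
  - intros [a [Ha Hs]]. apply level_add in Hs. change (level one) with 1%Z in Hs. lia.
Qed.
Lemma complement_level_l x k : (level x = 1 - k)%Z <-> exists a, level a = k /\ lexGamma_sum G a x one.
Proof.
  split.
  - intros Hx. destruct lexGamma_is_PEA as [_ [_ [Hc _]]].
    destruct (Hc x) as [_ [e [_ [He _]]]]. exists e. split; auto.
    apply level_add in He. change (level one) with 1%Z in He. lia.
  - intros [a [Ha Hs]]. apply level_add in Hs. change (level one) with 1%Z in Hs. lia.
Qed.

Lemma level0_ge0 x : level x = 0%Z -> O ≤ snd (proj1_sig x).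
Proof.
  destruct x as [[n g] Hx]. unfold level; simpl. intros ->.
  destruct (lex_between_cases 0 g Hx) as [[_ H] | [H _]]; [auto | discriminate].
Qed.

Lemma lexGamma_perfect : perfect (lexGamma_sum G) one.
Proof.
  exists (fun x => level x = 0%Z), (fun x => level x = 1%Z).
  split; [apply level_cases |].
  split; [intros x [E0 E1]; lia |].
  split; [exact (fun x => complement_level_r x 0) |].
  split; [exact (fun x => complement_level_l x 0) |].
  split; [exact (fun x => complement_level_r x 1) |].
  split; [exact (fun x => complement_level_l x 1) |].
  do 3 (split; [intros x y z Hx Hy Hs; apply level_add in Hs; lia |]).
  split; [intros x y z Hx Hy Hs; apply level_add in Hs; destruct (level_cases z); lia |].
  intros x y Hx Hy.
  exists (lexGamma0 _ (addg_ge0 G _ _ (level0_ge0 x Hx) (level0_ge0 y Hy))).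
  destruct x as [[n g] ?], y as [[m h] ?]. unfold level in *; simpl in *. subst n m.
  reflexivity.
Qed.
End LexGamma.

Section PEAIsoInvariance.
Variables (A B : Type) (sA : A -> A -> A -> Prop) (zA oA : A)
  (sB : B -> B -> B -> Prop) (zB oB : B) (f : A -> B) (g : B -> A).
Hypotheses (gK : forall x, g (f x) = x) (fK : forall y, f (g y) = y)
  (f0 : f zA = zB) (f1 : f oA = oB)
  (f_sum : forall a b c, sA a b c <-> sB (f a) (f b) (f c)).

Lemma iso_inj x y : f x = f y -> x = y.
Proof. intros E. rewrite <- (gK x), E, gK. auto. Qed.

Lemma iso_sum_inv a b c : sB a b c <-> sA (g a) (g b) (g c).
Proof. rewrite f_sum, !fK. tauto. Qed.

Lemma is_PEA_pullback : is_PEA sB zB oB -> is_PEA sA zA oA.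
Proof.
  intros [Hf [[Ha1 Ha2] [Hc [Hcj Ho]]]].
  split; [| split; [split | split; [| split]]].
  - intros a b c c' H1 H2. apply iso_inj. apply f_sum in H1, H2. eapply Hf; eauto.
  - intros a b c. specialize (Ha1 (f a) (f b) (f c)).
    split; intros [d [e [H1 H2]]]; apply f_sum in H1, H2.
    + destruct (proj1 Ha1 (ex_intro _ (f d) (ex_intro _ (f e) (conj H1 H2)))) as [d' [e' K]].
      exists (g d'), (g e'). rewrite !f_sum, !fK. exact K.
    + destruct (proj2 Ha1 (ex_intro _ (f d) (ex_intro _ (f e) (conj H1 H2)))) as [d' [e' K]].
      exists (g d'), (g e'). rewrite !f_sum, !fK. exact K.
  - intros a b c d e d' e' H1 H2 H3 H4. apply iso_inj.
    apply (Ha2 (f a) (f b) (f c) (f d) (f e) (f d') (f e')); apply f_sum; auto.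
  - intros a. destruct (Hc (f a)) as [d [e [H1 [H2 H3]]]].
    exists (g d), (g e). rewrite !f_sum, !fK, f1. split; [| split]; auto.
    intros d' e' K1 K2. rewrite f_sum, f1 in K1, K2. destruct (H3 _ _ K1 K2) as [E1 E2].
    rewrite <- E1, <- E2, !gK. auto.
  - intros a b c H. apply f_sum in H. destruct (Hcj _ _ _ H) as [d [e K]].
    exists (g d), (g e). rewrite !f_sum, !fK. exact K.
  - intros a c H. apply iso_inj. rewrite f0. apply (Ho (f a) (f c)).
    rewrite <- f1, <- !f_sum. exact H.
Qed.

Lemma perfect_pullback : perfect sB oB -> perfect sA oA.
Proof.
  intros [E0 [E1 [P1 [P2 [P3 [P4 [P5 [P6 [P7 [P8 [P9 [P10 P11]]]]]]]]]]]].
  assert (compl : forall (P Q : B -> Prop),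
    (forall y, P y <-> exists b, Q b /\ sB y b oB) ->
    forall x, P (f x) <-> exists a, Q (f a) /\ sA x a oA).
  { intros P Q HPQ x. rewrite HPQ. split.
    - intros [b [Hb Hs]]. exists (g b). rewrite f_sum, fK, f1. auto.
    - intros [a [Ha Hs]]. exists (f a). rewrite f_sum, f1 in Hs. auto. }
  assert (compl' : forall (P Q : B -> Prop),
    (forall y, P y <-> exists b, Q b /\ sB b y oB) ->
    forall x, P (f x) <-> exists a, Q (f a) /\ sA a x oA).
  { intros P Q HPQ x. rewrite HPQ. split.
    - intros [b [Hb Hs]]. exists (g b). rewrite f_sum, fK, f1. auto.
    - intros [a [Ha Hs]]. exists (f a). rewrite f_sum, f1 in Hs. auto. }
  exists (fun x => E0 (f x)), (fun x => E1 (f x)).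
  split; [intros x; apply P1 |].
  split; [intros x; apply P2 |].
  split; [apply compl, P3 |].
  split; [apply compl', P4 |].
  split; [apply compl, P5 |].
  split; [apply compl', P6 |].
  split; [intros x y z Hx Hy H; rewrite f_sum in H; eauto |].
  split; [intros x y z Hx Hy H; rewrite f_sum in H; eauto |].
  split; [intros x y z Hx Hy H; rewrite f_sum in H; eauto |].
  split; [intros x y z Hx Hy H; rewrite f_sum in H; exact (P10 _ _ _ Hx Hy H) |].
  intros x y Hx Hy. destruct (P11 _ _ Hx Hy) as [w Hw].
  exists (g w). rewrite f_sum, fK. exact Hw.
Qed.
End PEAIsoInvariance.

Lemma PEA_iso_is_PEA (A B : Type) (sA : A -> A -> A -> Prop) (zA oA : A)
  (sB : B -> B -> B -> Prop) (zB oB : B) :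
  PEA_iso sA zA oA sB zB oB -> is_PEA sB zB oB -> is_PEA sA zA oA.
Proof. intros [f [[g [gK fK]] [f0 [f1 f_sum]]]]. eapply is_PEA_pullback; eauto. Qed.

Lemma PEA_iso_perfect (A B : Type) (sA : A -> A -> A -> Prop) (zA oA : A)
  (sB : B -> B -> B -> Prop) (zB oB : B) :
  PEA_iso sA zA oA sB zB oB -> perfect sB oB -> perfect sA oA.
Proof. intros [f [[g [gK fK]] [f0 [f1 f_sum]]]]. eapply perfect_pullback; eauto. Qed.

Lemma PEA_iso_sym (A B : Type) (sA : A -> A -> A -> Prop) (zA oA : A)
  (sB : B -> B -> B -> Prop) (zB oB : B) :
  PEA_iso sA zA oA sB zB oB -> PEA_iso sB zB oB sA zA oA.
Proof.
  intros [f [[g [gK fK]] [f0 [f1 Hs]]]].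
  exists g. split; [exists f; auto |]. split; [| split].
  - rewrite <- f0, gK; auto.
  - rewrite <- f1, gK; auto.
  - apply iso_sum_inv with f; auto.
Qed.

Lemma PEA_iso_trans (A B C : Type) (sA : A -> A -> A -> Prop) (zA oA : A)
  (sB : B -> B -> B -> Prop) (zB oB : B) (sC : C -> C -> C -> Prop) (zC oC : C) :
  PEA_iso sA zA oA sB zB oB -> PEA_iso sB zB oB sC zC oC -> PEA_iso sA zA oA sC zC oC.
Proof.
  intros [f [[g [gK fK]] [f0 [f1 Hs]]]] [f' [[g' [gK' fK' ]] [f0' [f1' Hs']]]].
  exists (fun x => f' (f x)). split; [| split; [| split]].
  - exists (fun y => g (g' y)). split; intros; [rewrite gK', gK | rewrite fK, fK']; auto.
  - rewrite f0; auto.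
  - rewrite f1; auto.
  - intros a b c. rewrite Hs, Hs'. tauto.
Qed.

Lemma RDP1_transfer (A B : Type) (sA : A -> A -> A -> Prop) (sB : B -> B -> B -> Prop) (f : A -> B) :
  (forall y, exists x, f x = y) -> (forall a b c, sA a b c <-> sB (f a) (f b) (f c)) ->
  RDP1 sA -> RDP1 sB.
Proof.
  intros f_surj f_sum HR a1 a2 b1 b2 t Ha Hb.
  destruct (f_surj a1) as [a1' <-], (f_surj a2) as [a2' <-], (f_surj b1) as [b1' <-],
    (f_surj b2) as [b2' <-], (f_surj t) as [t' <-].
  apply f_sum in Ha, Hb.
  destruct (HR _ _ _ _ _ Ha Hb) as [c11 [c12 [c21 [c22 [H1 [H2 [H3 [H4 Hc]]]]]]]].
  exists (f c11), (f c12), (f c21), (f c22). rewrite <- !f_sum.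
  repeat split; auto.
  intros x y [c Hx] [d Hy].
  destruct (f_surj x) as [x' <-], (f_surj y) as [y' <-], (f_surj c) as [c' <-], (f_surj d) as [d' <-].
  apply f_sum in Hx, Hy. destruct (Hc x' y') as [w [Hw1 Hw2]]; [exists c'; auto | exists d'; auto |].
  exists (f w). rewrite <- !f_sum. auto.
Qed.

Definition cone_additive (G G' : pogroup) (phi : G -> G') : Prop :=
  forall a b, pg_le G (pg_zero G) a -> pg_le G (pg_zero G) b ->
    phi (pg_add G a b) = pg_add G' (phi a) (phi b).
Definition cone_preserving (G G' : pogroup) (phi : G -> G') : Prop :=
  forall g, pg_le G (pg_zero G) g -> pg_le G' (pg_zero G') (phi g).

Section ConeExtension.
Variables (G G' : pogroup) (dirG : pg_directed G) (phi : G -> G').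
Local Infix "⊕" := (pg_add G) (at level 50, left associativity).
Local Notation "⊖ x" := (pg_opp G x) (at level 35, right associativity).
Local Notation "'O'" := (pg_zero G).
Local Infix "≤" := (pg_le G) (at level 70).
Local Infix "⊞" := (pg_add G') (at level 50, left associativity).
Local Notation "⊟ x" := (pg_opp G' x) (at level 35, right associativity).
Local Notation "'O''" := (pg_zero G').
Let HG := pg_is_group G.
Let HG' := pg_is_group G'.
Hypothesis phiD : cone_additive G G' phi.

Lemma cone_additive_0 : phi O = O'.
Proof.
  apply (addgI HG' (phi O)). rewrite <- phiD, pg_add0r, pg_add0r; auto; apply pg_le_refl.
Qed.

Lemma cone_additive_diff_wd p q p' q' : O ≤ p -> O ≤ q -> O ≤ p' -> O ≤ q' ->
  p ⊕ ⊖q = p' ⊕ ⊖q' -> phi p ⊞ ⊟phi q = phi p' ⊞ ⊟phi q'.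
Proof.
  intros Hp Hq Hp' Hq' E.
  (* [p - q = (p + q') - (q + q') = (p' + v) - (q' + v)] where [q + q' = q' + v] *)
  set (v := ⊖q' ⊕ (q ⊕ q')).
  assert (Hv : O ≤ v) by (apply conjg_ge0; auto).
  assert (E1 : p ⊕ q' = p' ⊕ v).
  { unfold v. rewrite pg_addA, <- E, <- pg_addA, (addKg HG). auto. }
  assert (E2 : q ⊕ q' = q' ⊕ v) by (unfold v; rewrite (addNKg HG); auto).
  rewrite (subg_shift HG' (phi p) (phi q) (phi q')), (subg_shift HG' (phi p') (phi q') (phi v)).
  rewrite <- !phiD; auto. rewrite E1, E2. auto.
Qed.

Lemma cone_diff_exists x : exists p, O ≤ p /\ O ≤ ⊖x ⊕ p.
Proof.
  destruct (dirG x O) as [p [Hx Hp]]. exists p. split; auto. apply -> subg_ge0; auto.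
Qed.

(* [x = p - (-x + p)] with [p] an upper bound of [x] and [0] *)
Definition cone_ext (x : G) : G' :=
  let p := proj1_sig (constructive_indefinite_description _ (cone_diff_exists x)) in
  phi p ⊞ ⊟phi (⊖x ⊕ p).

Lemma cone_ext_diff x p q : O ≤ p -> O ≤ q -> x = p ⊕ ⊖q -> cone_ext x = phi p ⊞ ⊟phi q.
Proof.
  intros Hp Hq E. unfold cone_ext.
  destruct (constructive_indefinite_description _ (cone_diff_exists x)) as [r [Hr Hr']]; simpl.
  apply cone_additive_diff_wd; auto. rewrite <- E, (subg_subg HG). auto.
Qed.

Lemma cone_ext_ge0 x : O ≤ x -> cone_ext x = phi x.
Proof.
  intros Hx. rewrite (cone_ext_diff x x O); auto.
  - rewrite cone_additive_0, (oppg0 HG'), pg_add0r; auto.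
  - apply pg_le_refl.
  - rewrite (oppg0 HG), pg_add0r; auto.
Qed.

Lemma cone_extD x y : cone_ext (x ⊕ y) = cone_ext x ⊞ cone_ext y.
Proof.
  destruct (cone_diff_exists x) as [p [Hp Hq]], (cone_diff_exists y) as [r [Hr Hs]].
  set (q := ⊖x ⊕ p) in *. set (s := ⊖y ⊕ r) in *.
  assert (Ex : x = p ⊕ ⊖q) by (unfold q; rewrite (subg_subg HG); auto).
  assert (Ey : y = r ⊕ ⊖s) by (unfold s; rewrite (subg_subg HG); auto).
  clearbody q s.
  (* [r + q = q + r'] moves [q] across [r] *)
  set (r' := ⊖q ⊕ (r ⊕ q)).
  assert (Hr' : O ≤ r') by (apply conjg_ge0; auto).
  assert (Eq : phi r' = ⊟phi q ⊞ (phi r ⊞ phi q)).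
  { apply (addgI HG' (phi q)). rewrite (addNKg HG'), <- !phiD; auto.
    unfold r'. rewrite (addNKg HG). auto. }
  rewrite (cone_ext_diff x p q), (cone_ext_diff y r s); auto.
  rewrite (cone_ext_diff (x ⊕ y) (p ⊕ r') (s ⊕ q)); try apply addg_ge0; auto.
  - rewrite phiD, Eq, phiD, (oppgD HG'); auto.
    rewrite <- !pg_addA. f_equal. f_equal. f_equal. apply (addNKg HG').
  - unfold r'. rewrite Ex, Ey, (oppgD HG), <- !pg_addA, (addNKg HG). auto.
Qed.

Lemma cone_ext_opp x : cone_ext (⊖x) = ⊟cone_ext x.
Proof.
  apply (opp_unique_l HG'). rewrite <- cone_extD, pg_addNl, cone_ext_ge0, cone_additive_0; auto.
  apply pg_le_refl.
Qed.
End ConeExtension.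

Lemma cone_ext_cancel (G G' : pogroup) (dirG : pg_directed G) (dirG' : pg_directed G')
  (phi : G -> G') (psi : G' -> G) :
  cone_additive G G' phi -> cone_additive G' G psi -> cone_preserving G G' phi ->
  (forall g, pg_le G (pg_zero G) g -> psi (phi g) = g) ->
  forall x, cone_ext G' G dirG' psi (cone_ext G G' dirG phi x) = x.
Proof.
  intros phiD psiD phi_ge0 psi_phi x.
  destruct (cone_diff_exists G dirG x) as [p [Hp Hq]].
  set (q := pg_add G (pg_opp G x) p) in Hq.
  assert (Ex : x = pg_add G p (pg_opp G q)) by (unfold q; rewrite (subg_subg (pg_is_group G)); auto).
  rewrite (cone_ext_diff G G' dirG phi phiD x p q Hp Hq Ex).
  rewrite (cone_ext_diff G' G dirG' psi psiD _ (phi p) (phi q)); auto.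
  rewrite !psi_phi; auto.
Qed.

Lemma pogroup_iso_of_cones (G G' : pogroup) (dirG : pg_directed G) (dirG' : pg_directed G')
  (phi : G -> G') (psi : G' -> G) :
  cone_additive G G' phi -> cone_additive G' G psi ->
  cone_preserving G G' phi -> cone_preserving G' G psi ->
  (forall g, pg_le G (pg_zero G) g -> psi (phi g) = g) ->
  (forall g, pg_le G' (pg_zero G') g -> phi (psi g) = g) ->
  pogroup_iso G G'.
Proof.
  intros phiD psiD phi_ge0 psi_ge0 psi_phi phi_psi.
  set (F := cone_ext G G' dirG phi).
  pose proof (cone_ext_cancel G G' dirG dirG' phi psi phiD psiD phi_ge0 psi_phi) as F'K.
  exists F. split; [exists (cone_ext G' G dirG' psi); split;
    [exact F'K | exact (cone_ext_cancel G' G dirG' dirG psi phi psiD phiD psi_ge0 phi_psi)] |].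
  split; [exact (cone_extD G G' dirG phi phiD) |].
  assert (F_sub : forall x y, F (pg_add G (pg_opp G x) y) = pg_add G' (pg_opp G' (F x)) (F y)).
  { intros x y. unfold F. rewrite cone_extD, cone_ext_opp; auto. }
  intros x y. rewrite (subg_ge0 G x y), (subg_ge0 G' (F x) (F y)), <- F_sub. split; intros Hle.
  - unfold F. rewrite cone_ext_ge0; auto.
  - rewrite <- (F'K (pg_add G (pg_opp G x) y)), cone_ext_ge0; auto.
Qed.

Section LexGammaMorphism.
Variables (G G' : pogroup) (h : lexGamma G -> lexGamma G').
Hypothesis h_sum : forall a b c, lexGamma_sum G a b c -> lexGamma_sum G' (h a) (h b) (h c).
Local Notation "'O'" := (pg_zero G).
Local Infix "≤" := (pg_le G) (at level 70).

Lemma lexGamma0_sum g k (Hg : O ≤ g) (Hk : O ≤ k) :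
  lexGamma_sum G (lexGamma0 G g Hg) (lexGamma0 G k Hk) (lexGamma0 G _ (addg_ge0 G g k Hg Hk)).
Proof. reflexivity. Qed.

(* [x + x] is defined only at level 0, so level 0 is preserved *)
Lemma level_morph0 g (Hg : O ≤ g) : level G' (h (lexGamma0 G g Hg)) = 0%Z.
Proof.
  pose proof (level_add G' _ _ _ (h_sum _ _ _ (lexGamma0_sum g g Hg Hg))) as Hl.
  destruct (level_cases G' (h (lexGamma0 G g Hg))), (level_cases G' (h (lexGamma0 G _ (addg_ge0 G g g Hg Hg))));
    lia.
Qed.

(* off the positive cone the value is irrelevant *)
Definition level0_map (g : G) : G' :=
  match excluded_middle_informative (O ≤ g) with
  | left Hg => snd (proj1_sig (h (lexGamma0 G g Hg)))
  | right _ => pg_zero G'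
  end.

Lemma level0_map_spec g (Hg : O ≤ g) : proj1_sig (h (lexGamma0 G g Hg)) = (0%Z, level0_map g).
Proof.
  unfold level0_map. destruct (excluded_middle_informative (O ≤ g)) as [Hg' | NHg]; [| contradiction].
  replace Hg' with Hg by apply proof_irrelevance.
  pose proof (level_morph0 g Hg) as H0. unfold level in H0.
  destruct (proj1_sig (h (lexGamma0 G g Hg))) as [n k]; simpl in *. subst n. reflexivity.
Qed.

Lemma level0_map_ge0 : cone_preserving G G' level0_map.
Proof.
  intros g Hg. pose proof (level0_ge0 G' _ (level_morph0 g Hg)) as H0.
  rewrite level0_map_spec in H0. exact H0.
Qed.

Lemma level0_mapD : cone_additive G G' level0_map.
Proof.
  intros a b Ha Hb. pose proof (h_sum _ _ _ (lexGamma0_sum a b Ha Hb)) as Hs.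
  unfold lexGamma_sum, Gamma_sum in Hs. rewrite !level0_map_spec in Hs.
  injection Hs. auto.
Qed.
End LexGammaMorphism.

Lemma level0_map_cancel (G G' : pogroup) (h : lexGamma G -> lexGamma G') (h' : lexGamma G' -> lexGamma G) :
  (forall a b c, lexGamma_sum G a b c -> lexGamma_sum G' (h a) (h b) (h c)) ->
  (forall a b c, lexGamma_sum G' a b c -> lexGamma_sum G (h' a) (h' b) (h' c)) ->
  (forall x, h' (h x) = x) ->
  forall g, pg_le G (pg_zero G) g -> level0_map G' G h' (level0_map G G' h g) = g.
Proof.
  intros h_sum h'_sum h'K g Hg.
  set (Hphi := level0_map_ge0 G G' h h_sum g Hg).
  assert (Eh : h (lexGamma0 G g Hg) = lexGamma0 G' _ Hphi).
  { apply proj1_sig_inj. apply level0_map_spec; auto. }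
  pose proof (level0_map_spec G' G h' h'_sum _ Hphi) as E.
  rewrite <- Eh, h'K in E. injection E. auto.
Qed.

Lemma lexGamma_iso_pogroup_iso (G G' : pogroup) : pg_directed G -> pg_directed G' ->
  PEA_iso (lexGamma_sum G) (lexGamma_zero G) (lexGamma_one G)
          (lexGamma_sum G') (lexGamma_zero G') (lexGamma_one G') -> pogroup_iso G G'.
Proof.
  intros dirG dirG' [h [[h' [h'K hK]] [_ [_ h_iff]]]].
  assert (h_sum : forall a b c, lexGamma_sum G a b c -> lexGamma_sum G' (h a) (h b) (h c)).
  { intros a b c. apply h_iff. }
  assert (h'_sum : forall a b c, lexGamma_sum G' a b c -> lexGamma_sum G (h' a) (h' b) (h' c)).
  { intros a b c. apply iso_sum_inv with h; auto. }
  apply (pogroup_iso_of_cones G G' dirG dirG' (level0_map G G' h) (level0_map G' G h')).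
  - apply level0_mapD; auto.
  - apply level0_mapD; auto.
  - apply level0_map_ge0; auto.
  - apply level0_map_ge0; auto.
  - apply level0_map_cancel; auto.
  - apply level0_map_cancel; auto.
Qed.

Definition graph {M : Type} (add : M -> M -> M) : M -> M -> M -> Prop :=
  fun a b c => add a b = c.

Section TotalGPEA.
Context {M : Type} {add : M -> M -> M} {z : M}.
Hypothesis HM : is_GPEA (graph add) z.
Local Infix "⊕" := add (at level 50, left associativity).

Lemma gpea_addA a b c : a ⊕ (b ⊕ c) = a ⊕ b ⊕ c.
Proof.
  destruct HM as [_ [[_ Ha] _]]. symmetry.
  eapply Ha; reflexivity.
Qed.
Lemma gpea_add0l a : z ⊕ a = a.
Proof. apply HM. Qed.
Lemma gpea_add0r a : a ⊕ z = a.
Proof. apply HM. Qed.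
Lemma gpea_addI a b c : a ⊕ b = a ⊕ c -> b = c.
Proof. destruct HM as [_ [_ [_ [[Hc _] _]]]]. intros E. eapply Hc; [reflexivity | exact (eq_sym E)]. Qed.
Lemma gpea_addIr a b c : b ⊕ a = c ⊕ a -> b = c.
Proof. destruct HM as [_ [_ [_ [[_ Hc] _]]]]. intros E. eapply Hc; [reflexivity | exact (eq_sym E)]. Qed.
Lemma gpea_add_eq0 a b : a ⊕ b = z -> a = z.
Proof. apply HM. Qed.
Lemma gpea_conj_l a b : exists d, a ⊕ b = d ⊕ a.
Proof. destruct HM as [_ [_ [Hc _]]]. destruct (Hc a b _ eq_refl) as [d [_ [Hd _]]]. eauto. Qed.
Lemma gpea_conj_r a b : exists e, a ⊕ b = b ⊕ e.
Proof. destruct HM as [_ [_ [Hc _]]]. destruct (Hc a b _ eq_refl) as [_ [e [_ He]]]. eauto. Qed.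
End TotalGPEA.

Lemma graph_is_GPEA {M : Type} (add : M -> M -> M) (z : M) :
  (forall a b c, add a (add b c) = add (add a b) c) ->
  (forall a, add z a = a) -> (forall a, add a z = a) ->
  (forall a b c, add a b = add a c -> b = c) ->
  (forall a b c, add b a = add c a -> b = c) ->
  (forall a b, add a b = z -> a = z) ->
  (forall a b, exists d, add a b = add d a) ->
  (forall a b, exists e, add a b = add b e) ->
  is_GPEA (graph add) z.
Proof.
  unfold graph. intros addA add0l add0r addI addIr add_eq0 conj_l conj_r.
  split; [| split; [| split; [| split; [| split]]]].
  - congruence.
  - split.
    + intros a b c; split; intros _; eauto.
    + intros a b c d e d' e' <- <- <- <-. symmetry; apply addA.
  - intros a b c <-. destruct (conj_l a b) as [d Hd], (conj_r a b) as [e He]. eauto.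
  - split.
    + intros a b b' c <- E. symmetry; eapply addI; eauto.
    + intros a a' b c <- E. symmetry; eapply addIr; eauto.
  - intros a b E. pose proof (add_eq0 a b E) as ->. rewrite add0l in E. auto.
  - auto.
Qed.

Definition pointwise (I : Type) {M : Type} (add : M -> M -> M) (f g : I -> M) : I -> M :=
  fun i => add (f i) (g i).

Lemma pointwise_is_GPEA (I : Type) {M : Type} (add : M -> M -> M) (z : M) :
  is_GPEA (graph add) z -> is_GPEA (graph (pointwise I add)) (fun _ => z).
Proof.
  intros HM. unfold pointwise. apply graph_is_GPEA.
  - intros a b c. extensionality i. apply (gpea_addA HM).
  - intros a. extensionality i. apply (gpea_add0l HM).
  - intros a. extensionality i. apply (gpea_add0r HM).
  - intros a b c E. extensionality i. exact (gpea_addI HM _ _ _ (equal_f E i)).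
  - intros a b c E. extensionality i. exact (gpea_addIr HM _ _ _ (equal_f E i)).
  - intros a b E. extensionality i. exact (gpea_add_eq0 HM _ _ (equal_f E i)).
  - intros a b. destruct (choice _ (fun i => gpea_conj_l HM (a i) (b i))) as [d Hd].
    exists d. extensionality i. apply Hd.
  - intros a b. destruct (choice _ (fun i => gpea_conj_r HM (a i) (b i))) as [e He].
    exists e. extensionality i. apply He.
Qed.

Lemma pointwise_RDP1 (I : Type) {M : Type} (add : M -> M -> M) :
  RDP1 (graph add) -> RDP1 (graph (pointwise I add)).
Proof.
  unfold RDP1, gle, commute, graph, pointwise. intros Hr a1 a2 b1 b2 t Ha Hb.
  assert (Hi : forall i, exists c : M * M * M * M,
    let '(c11, c12, c21, c22) := c in
    add c11 c12 = a1 i /\ add c21 c22 = a2 i /\ add c11 c21 = b1 i /\ add c12 c22 = b2 i /\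
    (forall x y, (exists d, add x d = c12) -> (exists d, add y d = c21) ->
       exists w, add x y = w /\ add y x = w)).
  { intros i. destruct (Hr (a1 i) (a2 i) (b1 i) (b2 i) (t i) (equal_f Ha i) (equal_f Hb i))
      as [c11 [c12 [c21 [c22 Hc]]]].
    exists (c11, c12, c21, c22). exact Hc. }
  destruct (choice _ Hi) as [c Hc].
  exists (fun i => fst (fst (fst (c i)))), (fun i => snd (fst (fst (c i)))),
         (fun i => snd (fst (c i))), (fun i => snd (c i)).
  repeat split; try (extensionality i; specialize (Hc i);
    destruct (c i) as [[[c11 c12] c21] c22]; simpl; tauto).
  intros x y [d Hd] [e He]. exists (fun i => add (x i) (y i)). split; auto.
  extensionality i. specialize (Hc i). apply equal_f with (x := i) in Hd, He.
  destruct (c i) as [[[c11 c12] c21] c22]; simpl in *.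
  destruct Hc as [_ [_ [_ [_ Hcomm]]]]. destruct (Hcomm (x i) (y i)) as [w [<- <-]]; eauto.
Qed.

Section Differences.
Context {M : Type} {add : M -> M -> M} {z : M}.
Hypothesis HM : is_GPEA (graph add) z.
Local Infix "⊕" := add (at level 50, left associativity).

(* The difference [a - b] is represented by the graph of right translation
   [y = x + (a - b)], i.e. by the relation [x + a = y + b]. *)
Definition diff_rel (a b : M) : M -> M -> Prop := fun x y => x ⊕ a = y ⊕ b.
(* Composition of translations; shifting the source by [u] guarantees that an
   intermediate point [w] exists. *)
Definition rel_add (R S : M -> M -> Prop) : M -> M -> Prop :=
  fun x y => exists u w, R (u ⊕ x) w /\ S w (u ⊕ y).
Definition rel_opp (R : M -> M -> Prop) : M -> M -> Prop := fun x y => R y x.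
Definition is_diff (R : M -> M -> Prop) : Prop := exists a b, R = diff_rel a b.

Lemma rel_add_diff a b c d e : c ⊕ b = b ⊕ e ->
  rel_add (diff_rel a b) (diff_rel c d) = diff_rel (a ⊕ e) (d ⊕ b).
Proof.
  intros H. unfold rel_add, diff_rel. extensionality x; extensionality y.
  apply propositional_extensionality. split.
  - intros [u [w [H1 H2]]]. apply (gpea_addI HM u). rewrite !(gpea_addA HM), H1.
    rewrite <- (gpea_addA HM w b e), <- H, (gpea_addA HM w c b), H2. auto.
  - intros Hx. destruct (gpea_conj_l HM b (x ⊕ a)) as [w Hw]. exists b, w. split.
    + rewrite <- (gpea_addA HM). exact Hw.
    + apply (gpea_addIr HM b). rewrite <- (gpea_addA HM w c b), H, (gpea_addA HM w b e), <- Hw.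
      rewrite <- (gpea_addA HM b (x ⊕ a) e), <- (gpea_addA HM x a e), Hx, !(gpea_addA HM). auto.
Qed.

Lemma rel_opp_diff a b : rel_opp (diff_rel a b) = diff_rel b a.
Proof.
  unfold rel_opp, diff_rel. extensionality x; extensionality y.
  apply propositional_extensionality; split; auto.
Qed.

Lemma diff_rel_diag a : diff_rel a a = diff_rel z z.
Proof.
  unfold diff_rel. extensionality x; extensionality y. apply propositional_extensionality.
  rewrite !(gpea_add0r HM). split; [apply (gpea_addIr HM) | intros ->; auto].
Qed.

Lemma is_diff_rel a b : is_diff (diff_rel a b).
Proof. exists a, b; auto. Qed.
Lemma is_diff_add R S : is_diff R -> is_diff S -> is_diff (rel_add R S).
Proof.
  intros [a [b ->]] [c [d ->]]. destruct (gpea_conj_r HM c b) as [e He].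
  rewrite (rel_add_diff a b c d e He). apply is_diff_rel.
Qed.
Lemma is_diff_opp R : is_diff R -> is_diff (rel_opp R).
Proof. intros [a [b ->]]. rewrite rel_opp_diff. apply is_diff_rel. Qed.

Definition diffs := {R | is_diff R}.
Definition diff_add (x y : diffs) : diffs :=
  exist is_diff (rel_add (proj1_sig x) (proj1_sig y)) (is_diff_add _ _ (proj2_sig x) (proj2_sig y)).
Definition diff_opp (x : diffs) : diffs :=
  exist is_diff (rel_opp (proj1_sig x)) (is_diff_opp _ (proj2_sig x)).
Definition diff_of (a b : M) : diffs := exist is_diff (diff_rel a b) (is_diff_rel a b).
Definition diff_zero : diffs := diff_of z z.
Definition emb (m : M) : diffs := diff_of m z.

Local Infix "⊞" := diff_add (at level 50, left associativity).
Local Notation "⊟ x" := (diff_opp x) (at level 35, right associativity).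

Lemma diffs_ind (P : diffs -> Prop) : (forall a b, P (diff_of a b)) -> forall x, P x.
Proof.
  intros H [R [a [b ->]]]. replace (exist _ _ _) with (diff_of a b) by (apply proj1_sig_inj; auto).
  apply H.
Qed.

Lemma diff_add_of a b c d e : c ⊕ b = b ⊕ e -> diff_of a b ⊞ diff_of c d = diff_of (a ⊕ e) (d ⊕ b).
Proof. intros H. apply proj1_sig_inj. apply rel_add_diff; auto. Qed.
Lemma diff_opp_of a b : ⊟diff_of a b = diff_of b a.
Proof. apply proj1_sig_inj. apply rel_opp_diff. Qed.
Lemma diff_of_diag a : diff_of a a = diff_zero.
Proof. apply proj1_sig_inj. apply diff_rel_diag. Qed.

Lemma diff_addA x y w : x ⊞ (y ⊞ w) = x ⊞ y ⊞ w.
Proof.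
  induction x as [a b] using diffs_ind; induction y as [c d] using diffs_ind;
    induction w as [f h] using diffs_ind.
  destruct (gpea_conj_r HM c b) as [e1 H1], (gpea_conj_r HM f d) as [e3 H3].
  destruct (gpea_conj_r HM f (d ⊕ b)) as [e2 H2], (gpea_conj_r HM (c ⊕ e3) b) as [e4 H4].
  rewrite (diff_add_of c d f h e3 H3), (diff_add_of a b _ _ e4 H4),
    (diff_add_of a b c d e1 H1), (diff_add_of _ _ f h e2 H2).
  (* [e4] and [e1 + e2] both move [c + e3] across [b] *)
  assert (E : e1 ⊕ e2 = e4).
  { apply (gpea_addI HM b). rewrite <- H4, (gpea_addA HM), <- H1, <- !(gpea_addA HM). f_equal.
    apply (gpea_addI HM d). rewrite (gpea_addA HM d b e2), <- H2, (gpea_addA HM d e3 b), <- H3,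
      (gpea_addA HM). auto. }
  rewrite <- E, <- !(gpea_addA HM). auto.
Qed.
Lemma diff_add0l x : diff_zero ⊞ x = x.
Proof.
  induction x as [a b] using diffs_ind. unfold diff_zero.
  rewrite (diff_add_of z z a b a); rewrite ?(gpea_add0l HM), ?(gpea_add0r HM); auto.
Qed.
Lemma diff_add0r x : x ⊞ diff_zero = x.
Proof.
  induction x as [a b] using diffs_ind. unfold diff_zero.
  rewrite (diff_add_of a b z z z); rewrite ?(gpea_add0l HM), ?(gpea_add0r HM); auto.
Qed.
Lemma diff_addNl x : ⊟x ⊞ x = diff_zero.
Proof.
  induction x as [a b] using diffs_ind.
  rewrite diff_opp_of, (diff_add_of b a a b a); auto. apply diff_of_diag.
Qed.
Lemma diff_addNr x : x ⊞ ⊟x = diff_zero.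
Proof.
  induction x as [a b] using diffs_ind.
  rewrite diff_opp_of, (diff_add_of a b b a b); auto. apply diff_of_diag.
Qed.

Lemma diffs_is_group : is_group diff_add diff_opp diff_zero.
Proof. split; [exact diff_addA | exact diff_add0l | exact diff_add0r | exact diff_addNl | exact diff_addNr]. Qed.
Let DG := diffs_is_group.

Lemma emb_add a c : emb a ⊞ emb c = emb (a ⊕ c).
Proof.
  unfold emb. rewrite (diff_add_of a z c z c); rewrite ?(gpea_add0l HM), ?(gpea_add0r HM); auto.
Qed.
Lemma emb_inj a c : emb a = emb c -> a = c.
Proof.
  intros H. apply (f_equal (@proj1_sig _ _)) in H. simpl in H.
  assert (Hz : diff_rel a z z a) by (unfold diff_rel; rewrite (gpea_add0l HM), (gpea_add0r HM); auto).
  rewrite H in Hz. unfold diff_rel in Hz. rewrite (gpea_add0l HM), (gpea_add0r HM) in Hz. auto.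
Qed.
Lemma emb0 : emb z = diff_zero.
Proof. reflexivity. Qed.
Lemma diff_of_emb a b : diff_of a b = emb a ⊞ ⊟emb b.
Proof.
  unfold emb. rewrite diff_opp_of, (diff_add_of a z z b z); [| reflexivity].
  rewrite !(gpea_add0r HM). auto.
Qed.

Definition diff_le (x y : diffs) : Prop := exists m, ⊟x ⊞ y = emb m.

Lemma diff_le_refl x : diff_le x x.
Proof. exists z. rewrite diff_addNl. reflexivity. Qed.
Lemma diff_le_trans x y w : diff_le x y -> diff_le y w -> diff_le x w.
Proof.
  intros [m1 H1] [m2 H2]. exists (m1 ⊕ m2).
  rewrite <- emb_add, <- H1, <- H2, <- diff_addA, (addNKg DG). auto.
Qed.
Lemma diff_le_anti x y : diff_le x y -> diff_le y x -> x = y.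
Proof.
  intros [m1 H1] [m2 H2].
  assert (E : emb (m1 ⊕ m2) = emb z).
  { rewrite <- emb_add, <- H1, <- H2, emb0, <- diff_addA, (addNKg DG). apply diff_addNl. }
  apply emb_inj, (gpea_add_eq0 HM) in E. subst m1. rewrite emb0 in H1.
  apply (opp_unique DG) in H1. rewrite H1. symmetry; apply (oppgK DG).
Qed.

Lemma conj_emb_r p m : exists m', ⊟emb p ⊞ (emb m ⊞ emb p) = emb m'.
Proof.
  destruct (gpea_conj_r HM m p) as [m' H]. exists m'.
  rewrite emb_add, H, <- emb_add. apply (addKg DG).
Qed.
Lemma conj_emb_l q m : exists m', emb q ⊞ (emb m ⊞ ⊟emb q) = emb m'.
Proof.
  destruct (gpea_conj_l HM q m) as [m' H]. exists m'.
  rewrite diff_addA, emb_add, H, <- emb_add. apply (addgK DG).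
Qed.
Lemma conj_emb b m : exists m', ⊟b ⊞ (emb m ⊞ b) = emb m'.
Proof.
  induction b as [p q] using diffs_ind. rewrite diff_of_emb, (conj_by_diff DG).
  destruct (conj_emb_r p m) as [m1 ->]. apply conj_emb_l.
Qed.

Lemma diff_le_add a b x y : diff_le x y -> diff_le (a ⊞ (x ⊞ b)) (a ⊞ (y ⊞ b)).
Proof. intros [m H]. unfold diff_le. rewrite (translate_diff DG), H. apply conj_emb. Qed.

Definition diff_group : pogroup :=
  PoGroup diffs diff_add diff_opp diff_zero diff_le diff_addA diff_add0l diff_add0r
    diff_addNl diff_addNr diff_le_refl diff_le_trans diff_le_anti diff_le_add.

Lemma emb_ge0 m : pg_le diff_group (pg_zero diff_group) (emb m).
Proof. exists m. simpl. rewrite (oppg0 DG), diff_add0l. auto. Qed.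
Lemma ge0_emb x : pg_le diff_group (pg_zero diff_group) x -> exists m, x = emb m.
Proof. intros [m H]. simpl in H. rewrite (oppg0 DG), diff_add0l in H. eauto. Qed.

Lemma diff_group_directed : pg_directed diff_group.
Proof.
  (* [a - b <= a <= a + c] and [c - d <= c <= a + c = c + e] *)
  assert (Hle : forall a b c, diff_le (emb a ⊞ ⊟emb b) (emb (a ⊕ c))).
  { intros a b c. apply diff_le_trans with (emb a).
    - exists b. rewrite (oppgD DG), (oppgK DG). apply (addgNK DG).
    - exists c. rewrite <- emb_add. apply (addKg DG). }
  intros x y. induction x as [a b] using diffs_ind. induction y as [c d] using diffs_ind.
  rewrite !diff_of_emb. destruct (gpea_conj_r HM a c) as [e He].
  exists (emb (a ⊕ c)). split; [apply Hle | rewrite He; apply Hle].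
Qed.

Definition cone_emb (m : M) : poscone diff_group := exist _ (emb m) (emb_ge0 m).

Lemma cone_emb_surj x : exists m, cone_emb m = x.
Proof.
  destruct x as [g Hg]. destruct (ge0_emb g Hg) as [m ->]. exists m. apply proj1_sig_inj; auto.
Qed.

Lemma cone_emb_sum a b c : graph add a b c <-> poscone_sum diff_group (cone_emb a) (cone_emb b) (cone_emb c).
Proof.
  unfold graph, poscone_sum; simpl. rewrite emb_add. split; [intros <-; auto | apply emb_inj].
Qed.

Lemma diff_group_RDP1 : RDP1 (graph add) -> pg_RDP1 diff_group.
Proof. apply RDP1_transfer with cone_emb; [exact cone_emb_surj | exact cone_emb_sum]. Qed.
End Differences.

Lemma lex_add_eq (G : pogroup) n m k (g h w : G) :
  lex_add G (n, g) (m, h) = (k, w) <-> (n + m = k)%Z /\ pg_add G g h = w.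
Proof. unfold lex_add; simpl. split; [intros E; injection E; auto | intros [-> ->]; auto]. Qed.

Section KiteIso.
Variables (I : Type) (lam laminv : I -> I).
Hypotheses (Hlam1 : forall i, laminv (lam i) = i) (Hlam2 : forall i, lam (laminv i) = i).
Variables (E : Type) (add : E -> E -> E) (z : E).
Hypothesis HE : is_GPEA (graph add) z.
Local Infix "⊕" := add (at level 50, left associativity).

Let HF := pointwise_is_GPEA I add z HE.
Local Notation G := (diff_group HF).
Local Notation embF := (@emb (I -> E) (pointwise I add) (fun _ => z)).
Local Notation "⊖ x" := (pg_opp G x) (at level 35, right associativity).
Let HG := pg_is_group G.

Lemma emb_sum_iff f g h : pg_add G (embF f) (embF g) = embF h <-> forall j, f j ⊕ g j = h j.
Proof.
  simpl. rewrite (emb_add HF). split.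
  - intros Eh j. apply (emb_inj HF) in Eh. exact (equal_f Eh j).
  - intros Eh. f_equal. extensionality j. apply Eh.
Qed.

Lemma forall_reindex (P : I -> Prop) : (forall i, P i) <-> (forall j, P (lam j)).
Proof. split; auto. intros H i. rewrite <- Hlam2. apply H. Qed.

Definition kite_to_lex (x : kite_car I E) : lexGamma G :=
  match x with
  | inl f => lexGamma0 G (embF f) (emb_ge0 HF f)
  | inr a => lexGamma1 G (⊖embF (fun j => a (lam j))) (oppg_le0 G _ (emb_ge0 HF _))
  end.

Lemma kite_to_lex_inj x y : kite_to_lex x = kite_to_lex y -> x = y.
Proof.
  intros H. apply (f_equal (@proj1_sig _ _)) in H.
  destruct x as [f | a], y as [g | b]; cbn [kite_to_lex lexGamma0 lexGamma1 proj1_sig] in H;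
    pose proof (f_equal fst H) as El; pose proof (f_equal snd H) as Eg; cbn [fst snd] in El, Eg; try lia.
  - f_equal. apply (emb_inj HF), Eg.
  - f_equal. extensionality i. rewrite <- (Hlam2 i).
    apply (f_equal (pg_opp G)) in Eg. rewrite !(oppgK HG) in Eg.
    exact (equal_f (emb_inj HF _ _ Eg) (laminv i)).
Qed.

Lemma kite_to_lex_surj y : exists x, kite_to_lex x = y.
Proof.
  destruct y as [[n g] Hm]. destruct (lex_between_cases G n g Hm) as [[-> Hg] | [-> Hg]].
  - destruct (ge0_emb HF g Hg) as [m ->]. exists (inl m). apply proj1_sig_inj; reflexivity.
  - destruct (ge0_emb HF _ (oppg_ge0 G g Hg)) as [m Em].
    exists (inr (fun i => m (laminv i))). apply proj1_sig_inj; cbn [kite_to_lex lexGamma1 proj1_sig].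
    assert (Em' : (fun j => m (laminv (lam j))) = m) by (extensionality j; rewrite Hlam1; auto).
    rewrite Em', <- Em, (oppgK HG). auto.
Qed.

Lemma kite_to_lex_sum a b c : kite_sum I E (graph add) laminv laminv a b c <->
  lexGamma_sum G (kite_to_lex a) (kite_to_lex b) (kite_to_lex c).
Proof.
  unfold lexGamma_sum, Gamma_sum, graph.
  destruct a as [f | a], b as [g | b], c as [h | c];
    cbn [kite_to_lex kite_sum lexGamma0 lexGamma1 proj1_sig]; rewrite lex_add_eq;
    try (split; [tauto | lia]).
  - rewrite emb_sum_iff. split; [auto | tauto].
  - rewrite (eq_opp_add_r HG), emb_sum_iff, forall_reindex.
    setoid_rewrite Hlam1. split; [auto | tauto].
  - rewrite (eq_opp_add_l HG), emb_sum_iff, forall_reindex.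
    setoid_rewrite Hlam1. split; [auto | tauto].
Qed.

Lemma kite_iso_lexGamma :
  PEA_iso (kite_sum I E (graph add) laminv laminv) (kite_zero I E z) (kite_one I E z)
    (lexGamma_sum G) (lexGamma_zero G) (lexGamma_one G).
Proof.
  exists kite_to_lex.
  split; [apply bijective_inverse; [apply kite_to_lex_inj | apply kite_to_lex_surj] |].
  split; [apply proj1_sig_inj; reflexivity |].
  split; [| apply kite_to_lex_sum].
  apply proj1_sig_inj; simpl. f_equal. apply (oppg0 HG).
Qed.
End KiteIso.

Lemma total_sum_graph (E : Type) (s : E -> E -> E -> Prop) :
  functional_sum s -> total_sum s -> exists add : E -> E -> E, s = graph add.
Proof.
  intros Hf Htot.
  destruct (choice (fun p c => s (fst p) (snd p) c) (fun p => Htot (fst p) (snd p))) as [f Hs].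
  exists (fun a b => f (a, b)).
  extensionality a; extensionality b; extensionality c. apply propositional_extensionality.
  unfold graph. split; [intros H; eapply Hf; [apply (Hs (a, b)) | exact H] | intros <-; apply (Hs (a, b))].
Qed.

Theorem theorem3p7 (I : Type) (lam laminv : I -> I)
  (Hlam1 : forall i, laminv (lam i) = i) (Hlam2 : forall i, lam (laminv i) = i)
  (E : Type) (sE : E -> E -> E -> Prop) (zE : E)
  (HE : is_GPEA sE zE) (Hdir : directed sE) (Hwc : weakly_commutative sE)
  (Hrdp : RDP1 sE) (Htot : total_sum sE) :
  let K := kite_sum I E sE laminv laminv in
  let K0 := kite_zero I E zE in
  let K1 := kite_one I E zE in
  (exists G : pogroup,
     pg_directed G /\ pg_RDP1 G /\
     PEA_iso K K0 K1 (lexGamma_sum G) (lexGamma_zero G) (lexGamma_one G) /\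
     (forall G' : pogroup,
        pg_directed G' -> pg_RDP1 G' ->
        PEA_iso K K0 K1 (lexGamma_sum G') (lexGamma_zero G') (lexGamma_one G') ->
        pogroup_iso G G')) /\
  is_PEA K K0 K1 /\ perfect K K1.
Proof.
  intros K K0 K1.
  destruct (total_sum_graph E sE (proj1 HE) Htot) as [add ->].
  set (G := diff_group (pointwise_is_GPEA I add zE HE)).
  pose proof (kite_iso_lexGamma I lam laminv Hlam1 Hlam2 E add zE HE) as Hiso.
  assert (dirG : pg_directed G) by apply diff_group_directed.
  split; [| split].
  - exists G. split; [exact dirG |].
    split; [apply diff_group_RDP1, pointwise_RDP1, Hrdp |].
    split; [exact Hiso |].
    intros G' dirG' _ Hiso'. apply lexGamma_iso_pogroup_iso; auto.
    eapply PEA_iso_trans; [apply PEA_iso_sym, Hiso | exact Hiso'].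
  - exact (PEA_iso_is_PEA _ _ _ _ _ _ _ _ Hiso (lexGamma_is_PEA G)).
  - exact (PEA_iso_perfect _ _ _ _ _ _ _ _ Hiso (lexGamma_perfect G)).
Qed.
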